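(* In a first-order theory with the signature and axioms described in the context, one can prove $O(\mathscr{R}, \mathscr{R}) \Leftrightarrow \neg O(\mathscr{R}, \mathscr{R})$; in particular, this theory is inconsistent.
   Context: Work in a first-order language (with equality) that does not use set theory. It has a unary predicate $C$ ($Cx$: ''$x$ is a category''), a binary predicate $O$ ($O(x,y)$: ''$y$ is an object of $x$''), a binary predicate $A$ ($A(x,y)$: ''$y$ is an arrow of $x$''), unary function symbols $\mathrm{dom}$ and $\mathrm{cod}$, a binary function symbol $\circ$ (composition), a unary function symbol $p \mapsto 1_p$ (identity arrow of $p$), and constant symbols $\mathbf{1}$ and $\mathscr{R}$. The theory contains the definition $\forall x\,(Cx \Leftrightarrow A_1 \wedge A_2 \wedge A_3 \wedge A_4 \wedge A_5)$, where: - $A_1 := \exists y\, O(x,y)$; - $A_2 := \exists z\, A(x,z)$; - $A_3 := \forall f\,(A(x,f) \Rightarrow \exists u \exists v\,(O(x,u) \wedge O(x,v) \wedge u = \mathrm{dom}\, f \wedge v = \mathrm{cod}\, f))$; - $A_4$ formalizes that every pair of arrows $f,g$ of $x$ with $\mathrm{dom}\, g = \mathrm{cod}\, f$ has a composite $g \circ f$, and that composition is associative; - $A_5$ formalizes that every object $b$ of $x$ has an identity arrow $1_b$ satisfying the identity laws $1_b \circ f = f$ and $g \circ 1_b = g$. The theory also contains an existence axiom for the category $\mathbf{1}$, which has exactly one object, none of its objects equal to $\mathbf{1}$, and whose arrows are identity arrows of its objects: $\exists x\,(Cx \wedge x = \mathbf{1} \wedge \exists! y\, \exists! z\,(O(\mathbf{1},y)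 \wedge A(\mathbf{1},z)) \wedge \forall u\,(O(\mathbf{1},u) \Rightarrow u \neq \mathbf{1}) \wedge \forall v\,(A(\mathbf{1},v) \Rightarrow \exists w\,(O(\mathbf{1},w) \wedge v = 1_w)))$. Finally, it contains an existence axiom for $\mathscr{R}$, the category whose objects are exactly the categories not identical to any of their own objects and whose arrows are exactly the identity arrows of its objects: $\exists x\,(Cx \wedge x = \mathscr{R} \wedge \forall y\,(O(\mathscr{R},y) \Leftrightarrow Cy \wedge \forall u\,(O(y,u) \Rightarrow y \neq u)) \wedge \forall z\,(A(\mathscr{R},z) \Leftrightarrow \exists v\,(O(\mathscr{R},v) \wedge z = 1_v)))$. *)

(* Shallow embedding: a structure for the signature
   (C, O, A, dom, cod, comp, id, one, R) on an arbitrary domain U. *)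

Record Sig := {
  U : Type;
  C : U -> Prop;
  O : U -> U -> Prop;
  A : U -> U -> Prop;
  dom : U -> U;
  cod : U -> U;
  comp : U -> U -> U;     (* comp g f  =  g o f *)
  ident : U -> U;
  one : U;
  RR : U
}.

Section Th.
Variable S : Sig.
Local Notation U := (U S).
Local Notation O := (O S).
Local Notation A := (A S).
Local Notation dom := (dom S).
Local Notation cod := (cod S).
Local Notation comp := (comp S).
Local Notation ident := (ident S).

Definition A1 (x : U) : Prop := exists y, O x y.
Definition A2 (x : U) : Prop := exists z, A x z.
Definition A3 (x : U) : Prop :=
  forall f, A x f -> exists u v, O x u /\ O x v /\ u = dom f /\ v = cod f.
Definition A4 (x : U) : Prop :=
  (forall f g, A x f -> A x g -> dom g = cod f ->
     A x (comp g f) /\ dom (comp g f) = dom f /\ cod (comp g f) = cod g) /\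
  (forall f g h, A x f -> A x g -> A x h -> dom g = cod f -> dom h = cod g ->
     comp h (comp g f) = comp (comp h g) f).
Definition A5 (x : U) : Prop :=
  forall b, O x b ->
    A x (ident b) /\ dom (ident b) = b /\ cod (ident b) = b /\
    (forall f, A x f -> cod f = b -> comp (ident b) f = f) /\
    (forall g, A x g -> dom g = b -> comp g (ident b) = g).

Definition C_def : Prop :=
  forall x, C S x <-> (A1 x /\ A2 x /\ A3 x /\ A4 x /\ A5 x).

Definition one_axiom : Prop :=
  exists x, C S x /\ x = one S /\
    (exists! y, exists! z, O (one S) y /\ A (one S) z) /\
    (forall u, O (one S) u -> u <> one S) /\
    (forall v, A (one S) v -> exists w, O (one S) w /\ v = ident w).

Definition R_axiom : Prop :=
  exists x, C S x /\ x = RR S /\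
    (forall y, O (RR S) y <-> (C S y /\ forall u, O y u -> y <> u)) /\
    (forall z, A (RR S) z <-> exists v, O (RR S) v /\ z = ident v).

Definition theory : Prop := C_def /\ one_axiom /\ R_axiom.
End Th.


(* Russell's paradox: [RR] is a category, so it is an object of itself exactly
   when it is not. *)

Lemma self_membership_paradox {U : Type} (C : U -> Prop) (O : U -> U -> Prop) (r : U) :
  C r -> (forall y, O r y <-> C y /\ forall u, O y u -> y <> u) ->
  (O r r <-> ~ O r r).
Proof.
  intros Cr Hr.
  assert (not_self : ~ O r r).
  { intros H. exact (proj2 (proj1 (Hr r) H) r H eq_refl). }
  split; [intros _; exact not_self|].
  intros _. apply Hr. split; [exact Cr|].
  intros u Hu <-. exact (not_self Hu).
Qed.

Lemma iff_not_self_False (P : Prop) : (P <-> ~ P) -> False.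
Proof.
  intros [HP HnP].
  assert (nP : ~ P) by (intro p; exact (HP p p)).
  exact (nP (HnP nP)).
Qed.

Theorem theorem1 :
  forall S : Sig, theory S ->
    (O S (RR S) (RR S) <-> ~ O S (RR S) (RR S)) /\ False.
Proof.
  intros S [_ [_ [x [Cx [-> [HO _]]]]]].
  assert (paradox := self_membership_paradox (C S) (O S) (RR S) Cx HO).
  exact (conj paradox (iff_not_self_False _ paradox)).
Qed.
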